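(* Let $\mathbb K$ be a field, $n\ge2$, and $\mathcal G_n$, $\mathcal N_{0,n}$, $U_m(z_g)$ as in the context. If $f\in A_{\mathbb K}(\mathcal G_n)$, then there is $m\ge1$ such that, with $U_m=\bigcup_{g\in\mathcal N_{0,n}}U_m(z_g)$, the restriction $f|_{U_m}$ is a $\mathbb K$-linear combination of the characteristic functions $1_{U_m(z_g)}$, $g\in\mathcal N_{0,n}$.
   Context: Let $X=\{\mathbf 0,\mathbf 1\}$, $X^*$ the finite words (with empty word $\varnothing$), $X^\omega$ the infinite words, $C(\eta)=\{\eta w:w\in X^\omega\}$, $\mathbf 1^m$ and $\mathbf 1^\infty$ the finite/infinite words of ones. Fix $n\ge2$, a primitive polynomial $f_n$ of degree $n$ over $\mathbb F_2$ with root $\alpha$, and $\operatorname{Tr}(\beta)=\beta+\beta^2+\dots+\beta^{2^{n-1}}\in\mathbb F_2$. $\mathfrak G_n$ is the group of automorphisms of the binary rooted tree $X^*$ generated by $a$ ($a\cdot(\mathbf 0w)=\mathbf 1w$, $a\cdot(\mathbf 1w)=\mathbf 0w$) and $\iota_n(\beta)$, $\beta\in\mathbb F_{2^n}$, where $\iota_n(\beta)\cdot(\mathbf 0w)=\mathbf 0(a^{\operatorname{Tr}(\beta)}\cdot w)$, $\iota_n(\beta)\cdot(\mathbf 1w)=\mathbf 1(\iota_n(\alpha\beta)\cdot w)$; restrictions $g|_x$ are given by $g\cdot(xw)=(g\cdot x)(g|_x\cdot w)$. $\mathcal N_{0,n}=\iota_n(\mathbb F_{2^n})$. $\mathcal G_n$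 is the groupoid of germs of the action of the inverse semigroup $\{(\eta,g,\mu)\}\cup\{0\}$ on $X^\omega$ with $(\eta,g,\mu):C(\mu)\to C(\eta)$, $\mu w\mapsto\eta(g\cdot w)$; germs $[(\eta,g,\mu),w]$, $w\in C(\mu)$, with $[(\eta,g,\mu),w]=[(\eta',g',\mu'),w']$ iff $w=w'$ and some finite prefix $\nu=\mu\epsilon=\mu'\epsilon'$ of $w$ satisfies $\eta(g\cdot\epsilon)=\eta'(g'\cdot\epsilon')$ and $g|_\epsilon=g'|_{\epsilon'}$. $\Theta(s,U)=\{[s,w]:w\in U\}$ for $s=(\eta,g,\mu)$, $U\subseteq C(\mu)$ open; these form a basis of the topology. $z_g=[(\varnothing,g,\varnothing),\mathbf 1^\infty]$ and $U_m(z_g)=\Theta((\varnothing,g,\varnothing),C(\mathbf 1^m))$. $A_{\mathbb K}(\mathcal G_n)$ is the Steinberg algebra: the $\mathbb K$-span of characteristic functions of compact open bisections of $\mathcal G_n$. *)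

From HB Require Import structures.
From mathcomp Require Import all_boot all_order all_algebra all_field.
From mathcomp Require Import boolp.
From Stdlib Require List.
Set Implicit Arguments. Unset Strict Implicit. Unset Printing Implicit Defensive.
Import GRing.Theory.
Local Open Scope ring_scope.

(* Letters: 0 = false, 1 = true.  Finite words X^* = seq bool,
   infinite words X^omega = nat -> bool. *)

Definition iword := nat -> bool.

Definition cyl (nu : seq bool) (w : iword) : Prop :=
  forall i, (i < size nu)%N -> w i = nth false nu i.

Definition iopen (U : iword -> Prop) : Prop :=
  forall w, U w -> exists k, forall w', (forall i, (i < k)%N -> w' i = w i) -> U w'.

Definition act_a (w : seq bool) : seq bool :=
  if w is b :: w' then (~~ b) :: w' else [::].

Section Gn.
Variables (F : finFieldType) (n : nat) (alpha : F).

Definition Tr (beta : F) : F := \sum_(i < n) beta ^+ (2 ^ i).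

Fixpoint iota_act (beta : F) (w : seq bool) : seq bool :=
  match w with
  | [::] => [::]
  | false :: w' => false :: (if Tr beta == 1 then act_a w' else w')
  | true :: w' => true :: iota_act (alpha * beta) w'
  end.

Inductive InG : (seq bool -> seq bool) -> Prop :=
  | InG_id : InG id
  | InG_a : InG act_a
  | InG_iota beta : InG (iota_act beta)
  | InG_comp g h : InG g -> InG h -> InG (fun w => g (h w))
  | InG_inv g h : InG g -> cancel g h -> cancel h g -> InG h.

End Gn.

Definition restr (g : seq bool -> seq bool) (x : seq bool) : seq bool -> seq bool :=
  fun v => drop (size x) (g (x ++ v)).

(* action of a (length- and prefix-preserving) tree map on infinite words *)
Definition iact (g : seq bool -> seq bool) (w : iword) : iword :=
  fun i => nth false (g (mkseq w i.+1)) i.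

(* raw representative of a germ [(eta, g, mu), w] *)
Record Rep := MkRep { r_eta : seq bool; r_g : seq bool -> seq bool;
                      r_mu : seq bool; r_w : iword }.

Definition germ_eq (r r' : Rep) : Prop :=
  (forall i, r_w r i = r_w r' i) /\
  exists e e' : seq bool,
    [/\ r_mu r ++ e = r_mu r' ++ e',
        cyl (r_mu r ++ e) (r_w r),
        r_eta r ++ r_g r e = r_eta r' ++ r_g r' e' &
        forall v, restr (r_g r) e v = restr (r_g r') e' v].

Definition src (r : Rep) : iword := r_w r.
Definition rng (r : Rep) : iword :=
  fun i => if (i < size (r_eta r))%N then nth false (r_eta r) i
           else iact (r_g r) (fun j => r_w r (j + size (r_mu r))%N)
                     (i - size (r_eta r))%N.

Section Groupoid.
Variables (F : finFieldType) (n : nat) (alpha : F).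

Definition wf (r : Rep) : Prop := InG n alpha (r_g r) /\ cyl (r_mu r) (r_w r).

(* sets of germs are predicates on representatives (restricted to wf ones) *)
Definition Theta (eta : seq bool) (g : seq bool -> seq bool) (mu : seq bool)
  (U : iword -> Prop) (r : Rep) : Prop :=
  exists w, [/\ U w, cyl mu w & germ_eq r (MkRep eta g mu w)].

Definition gopen (O : Rep -> Prop) : Prop :=
  forall r, wf r -> O r ->
    exists eta g mu (U : iword -> Prop),
      [/\ InG n alpha g, iopen U, (forall w, U w -> cyl mu w),
          Theta eta g mu U r &
          forall r', wf r' -> Theta eta g mu U r' -> O r'].

Definition gcompact (B : Rep -> Prop) : Prop :=
  forall Cov : (Rep -> Prop) -> Prop,
    (forall O, Cov O -> gopen O) ->
    (forall r, wf r -> B r -> exists2 O, Cov O & O r) ->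
    exists s : seq (Rep -> Prop),
      (forall O, List.In O s -> Cov O) /\
      (forall r, wf r -> B r -> exists2 O, List.In O s & O r).

Definition bisection (B : Rep -> Prop) : Prop :=
  forall r r', wf r -> wf r' -> B r -> B r' ->
    ((forall i, src r i = src r' i) -> germ_eq r r') /\
    ((forall i, rng r i = rng r' i) -> germ_eq r r').

Definition cobis (B : Rep -> Prop) : Prop := [/\ gopen B, gcompact B & bisection B].

Definition chi (K : fieldType) (B : Rep -> Prop) (r : Rep) : K :=
  if `[< B r >] then 1 else 0.

Definition steinberg (K : fieldType) (f : Rep -> K) : Prop :=
  exists s : seq (K * (Rep -> Prop)),
    (forall p, List.In p s -> cobis p.2) /\
    forall r, wf r -> f r = \sum_(p <- s) p.1 * chi K p.2 r.

End Groupoid.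

Definition ones (m : nat) : seq bool := nseq m true.

Definition Umz (m : nat) (g : seq bool -> seq bool) : Rep -> Prop :=
  Theta [::] g [::] (cyl (ones m)).

(* Every element of G_n eventually restricts into the nucleus {a^e iota(d)}, and the restriction
   of iota(d) along 1^k is iota(alpha^k d).  Hence a basic open set Theta(eta, g, mu, C(nu)) that
   meets U_m(z_beta) for every m already contains some germ z_gamma (this uses alpha != 0).
   Let B be a compact open bisection.  If B contains some z_b, then by openness it contains
   U_m(z_b) for m large, and since the germs of a bisection are determined by their sources, B
   agrees with U_m(z_b) on U_m.  Otherwise, covering B by finitely many basic open sets shows that
   B misses U_m for m large.  Linearity gives the statement for all of A_K(G_n). *)

From HB Require Import structures.
From mathcomp Require Import all_boot all_order all_algebra all_field.
From mathcomp Require Import boolp zify.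
Import GRing.Theory.
Local Open Scope ring_scope.
Set Implicit Arguments. Unset Strict Implicit.

Lemma prim_root_neq0 (R : nzRingType) k (z : R) : k.-primitive_root z -> z != 0.
Proof.
move=> zk; apply/eqP => z0; move: (prim_expr_order zk).
by rewrite z0 expr0n gtn_eqF ?(prim_order_gt0 zk) // => /eqP; rewrite eq_sym oner_eq0.
Qed.

Section Trace.
Variables (F : finFieldType) (n : nat).
Hypothesis cardF : #|F| = (2 ^ n)%N.

Lemma pchar2_finField : 2%N \in [pchar F].
Proof. exact: card_finPcharP cardF _. Qed.

Lemma Tr_add (a b : F) : Tr n (a + b) = Tr n a + Tr n b.
Proof.
rewrite /Tr -big_split /=; apply: eq_bigr => i _.
by rewrite exprDn_pchar // pnatX pnatE //= pchar2_finField.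
Qed.

Lemma Tr_sqr (a : F) : Tr n a ^+ 2 = Tr n a.
Proof.
rewrite /Tr -(pFrobenius_autE pchar2_finField) rmorph_sum /=.
have -> : \sum_(i < n) pFrobenius_aut pchar2_finField (a ^+ (2 ^ i))
          = \sum_(i < n) a ^+ (2 ^ i.+1).
  by apply: eq_bigr => i _; rewrite pFrobenius_autE -exprM expnSr.
case: n cardF => [|k] cardF'; first by rewrite !big_ord0.
by rewrite big_ord_recr big_ord_recl /= -cardF' expf_card expn0 expr1 addrC.
Qed.

Lemma Tr_bool (c : F) : Tr n c = 0 \/ Tr n c = 1.
Proof.
have : Tr n c * (Tr n c - 1) = 0 by rewrite mulrBr mulr1 -expr2 Tr_sqr subrr.
by move/eqP; rewrite mulf_eq0 subr_eq0 => /orP[]/eqP; [left|right].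
Qed.

Lemma Tr_eq1D (a b : F) : (Tr n (a + b) == 1) = (Tr n a == 1) (+) (Tr n b == 1).
Proof.
have o1 : (0 == 1 :> F) = false by rewrite eq_sym oner_eq0.
rewrite Tr_add; case: (Tr_bool a) (Tr_bool b) => -> [] ->;
  by rewrite ?addr0 ?add0r ?(addrr_pchar2 pchar2_finField) ?eqxx ?o1.
Qed.

Lemma Tr0_neq1 : (Tr n (0 : F) == 1) = false.
Proof. by have := Tr_eq1D 0 0; rewrite addr0 addbb. Qed.

End Trace.

Definition tree_map (g : seq bool -> seq bool) : Prop :=
  (forall x, size (g x) = size x) /\ (forall x y, g (x ++ y) = g x ++ restr g x y).

Lemma restr0 g : restr g [::] = g.
Proof. by apply/funext => v; rewrite /restr drop0. Qed.

Lemma restr_cat g x y : restr g (x ++ y) = restr (restr g x) y.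
Proof. by apply/funext => v; rewrite /restr drop_drop size_cat catA addnC. Qed.

Lemma restr_id x : restr id x = id.
Proof. by apply/funext => v; rewrite /restr drop_size_cat. Qed.

Lemma restr_comp g h x v : tree_map h ->
  restr (fun w => g (h w)) x v = restr g (h x) (restr h x v).
Proof. by move=> [hs hc]; rewrite {1}/restr hc /restr hs. Qed.

Lemma restr_eq_ext g g' x x' d :
  (forall v, restr g x v = restr g' x' v) ->
  forall v, restr g (x ++ d) v = restr g' (x' ++ d) v.
Proof. by move=> /funext e v; rewrite !restr_cat e. Qed.

Lemma tree_map_id : tree_map id.
Proof. by split=> // x y; rewrite restr_id. Qed.

Lemma tree_map_a : tree_map act_a.
Proof. by split=> [[]|[|b x] y] //; rewrite /restr ?drop0 //= drop_size_cat. Qed.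

Lemma tree_map_comp g h : tree_map g -> tree_map h -> tree_map (fun w => g (h w)).
Proof.
move=> [gs gc] hh; have [hs hc] := hh; split=> [x|x y]; first by rewrite gs hs.
by rewrite restr_comp // hc gc.
Qed.

Lemma tree_map_inv g h : tree_map g -> cancel g h -> cancel h g -> tree_map h.
Proof.
move=> [gs gc] gh hg.
have hs x : size (h x) = size x by rewrite -{2}(hg x) gs.
split=> // x y; set z := h (x ++ y).
have e : g (take (size x) z) ++ restr g (take (size x) z) (drop (size x) z) = x ++ y.
  by rewrite -gc cat_take_drop /z hg.
have sz : size (take (size x) z) = size x by rewrite size_takel // /z hs size_cat leq_addr.
have ezx : take (size x) z = h x.
  by rewrite -[take _ z]gh; congr h; move: e => /eqP; rewrite eqseq_cat ?gs // => /andP[/eqP].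
by rewrite -{1}(cat_take_drop (size x) z) ezx.
Qed.

Lemma restr_cancel g h x : tree_map h -> cancel h g -> cancel (restr h x) (restr g (h x)).
Proof.
move=> th hg v; have gh_id : (fun w => g (h w)) = id by apply/funext.
by rewrite -restr_comp // gh_id restr_id.
Qed.

Lemma act_aK : involutive act_a.
Proof. by case=> //= b w; rewrite negbK. Qed.

Lemma restr_a1 b : restr act_a [:: b] = id.
Proof. by apply/funext => v; rewrite /restr /= drop0. Qed.

Section Iota.
Variables (F : finFieldType) (n : nat).
Hypothesis cardF : #|F| = (2 ^ n)%N.
Variable alpha : F.
Local Notation iota := (iota_act n alpha).

Lemma iota_size b x : size (iota b x) = size x.
Proof. by elim: x b => [|[] x IH] b //=; rewrite ?IH //; case: ifP; case: x {IH}. Qed.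

Lemma restr_iota_true b : restr (iota b) [:: true] = iota (alpha * b).
Proof. by apply/funext => v; rewrite /restr /= drop0. Qed.

Lemma restr_iota_false b :
  restr (iota b) [:: false] = if Tr n b == 1 then act_a else id.
Proof. by apply/funext => v; rewrite /restr /= drop0; case: ifP. Qed.

Lemma tree_map_iota b : tree_map (iota b).
Proof.
split=> [x|x y]; first exact: iota_size.
elim: x b => [|[] x IH] b; first by rewrite restr0.
  by rewrite /= IH; congr (_ :: _ ++ _); rewrite -restr_iota_true -restr_cat.
have [sa ca] := tree_map_a.
by rewrite /restr /=; case: ifP => _; rewrite ?ca drop_size_cat // sa.
Qed.

Lemma iota_ones b m : iota b (ones m) = ones m.
Proof. by elim: m b => [|m IH] b //=; rewrite IH. Qed.

Lemma restr_iota_ones b m : restr (iota b) (ones m) = iota (alpha ^+ m * b).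
Proof.
elim: m b => [|m IH] b; first by rewrite restr0 mul1r.
change (ones m.+1) with ([:: true] ++ ones m).
by rewrite restr_cat restr_iota_true IH exprSr mulrA.
Qed.

Lemma iota_letter b c : iota b [:: c] = [:: c].
Proof. by case: c => //=; case: ifP. Qed.

Lemma iota_addr b b' w : iota b (iota b' w) = iota (b + b') w.
Proof.
elim: w b b' => [|[] w IH] b b' //=; first by rewrite IH mulrDr.
rewrite (Tr_eq1D cardF).
by case: (Tr n b == 1); case: (Tr n b' == 1); rewrite //= act_aK.
Qed.

Lemma iota0 : iota 0 = id.
Proof.
apply/funext => w; elim: w => [|[] w IH] //=; first by rewrite mulr0 IH.
by rewrite (Tr0_neq1 cardF).
Qed.

Lemma iotaK b : involutive (iota b).
Proof. by move=> w; rewrite iota_addr (addrr_pchar2 (pchar2_finField cardF)) iota0. Qed.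

Lemma tree_map_InG g : InG n alpha g -> tree_map g.
Proof.
elim=> [|||g1 h1 _ tg1 _ th1|g1 h1 _ tg1 gh hg].
- exact: tree_map_id.
- exact: tree_map_a.
- exact: tree_map_iota.
- exact: tree_map_comp.
- exact: tree_map_inv tg1 gh hg.
Qed.
End Iota.

Section Nucleus.
Variables (F : finFieldType) (n : nat).
Hypothesis cardF : #|F| = (2 ^ n)%N.
Variable alpha : F.
Local Notation iota := (iota_act n alpha).

Definition nuc (e : bool) (d : F) (w : seq bool) : seq bool :=
  if e then act_a (iota d w) else iota d w.

Definition in_nucleus g := exists e d, g = nuc e d.

Definition in_gens g := (exists d, g = iota d) \/ g = act_a.

Lemma iota_in_nucleus d : in_nucleus (iota d).
Proof. by exists false, d. Qed.

Lemma act_a_in_nucleus : in_nucleus act_a.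
Proof. by exists true, 0; rewrite /nuc (iota0 cardF). Qed.

Lemma id_in_nucleus : in_nucleus id.
Proof. by rewrite -(iota0 cardF alpha); exact: iota_in_nucleus. Qed.

Lemma gens_in_nucleus g : in_gens g -> in_nucleus g.
Proof. by case=> [[d ->]|->]; [exact: iota_in_nucleus | exact: act_a_in_nucleus]. Qed.

Lemma tree_map_gens g : in_gens g -> tree_map g.
Proof. by case=> [[d ->]|->]; [exact: tree_map_iota | exact: tree_map_a]. Qed.

Lemma tree_map_nuc e d : tree_map (nuc e d).
Proof.
case: e; last exact: tree_map_iota.
exact: tree_map_comp tree_map_a (tree_map_iota _ _ _).
Qed.

Lemma nuc_letter e d c : nuc e d [:: c] = [:: c (+) e].
Proof. by rewrite /nuc iota_letter; case: e; case: c. Qed.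

Lemma head_nuc e d c v : head false (nuc e d (c :: v)) = c (+) e.
Proof. by rewrite -cat1s (tree_map_nuc _ _).2 nuc_letter. Qed.

Lemma restr_nuc_letter e d c : restr (nuc e d) [:: c] = restr (iota d) [:: c].
Proof. by apply/funext => v; rewrite /restr /nuc; case: e => //=; case: c. Qed.

Lemma restr_iota_letter_gens d c : in_gens (restr (iota d) [:: c]).
Proof.
case: c; first by left; exists (alpha * d); rewrite restr_iota_true.
rewrite restr_iota_false; case: ifP => _; first by right.
by left; exists 0; rewrite (iota0 cardF).
Qed.

Lemma in_nucleus_restr g x : in_nucleus g -> in_nucleus (restr g x).
Proof.
elim: x g => [|c x IH] g; first by rewrite restr0.
move=> [e [d ->]]; rewrite -cat1s restr_cat restr_nuc_letter; apply: IH.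
exact/gens_in_nucleus/restr_iota_letter_gens.
Qed.

Lemma restr_gens_comp p q c : in_gens p -> in_gens q ->
  in_nucleus (restr (fun w => p (q w)) [:: c]).
Proof.
move=> gp gq; have -> : restr (fun w => p (q w)) [:: c]
    = (fun v => restr p (q [:: c]) (restr q [:: c] v)).
  by apply/funext => v; rewrite restr_comp //; exact: tree_map_gens.
case: gq => [[d' ->]|->]; last first.
  rewrite restr_a1 /=.
  case: gp => [[d ->]|->]; last by rewrite restr_a1; exact: id_in_nucleus.
  exact/gens_in_nucleus/restr_iota_letter_gens.
rewrite iota_letter.
case: gp => [[d ->]|->]; last first.
  by rewrite restr_a1; exact/gens_in_nucleus/restr_iota_letter_gens.
case: c.
  rewrite !restr_iota_true; exists false, (alpha * d + alpha * d').
  by apply/funext => v; rewrite /nuc (iota_addr cardF).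
rewrite !restr_iota_false.
case: (Tr n d == 1); case: (Tr n d' == 1).
- by exists false, 0; apply/funext => v; rewrite /nuc (iota0 cardF) act_aK.
- exact: act_a_in_nucleus.
- exact: act_a_in_nucleus.
- exact: id_in_nucleus.
Qed.

Lemma in_nucleus_restr_comp u v x : in_nucleus u -> in_nucleus v -> (1 < size x)%N ->
  in_nucleus (restr (fun w => u (v w)) x).
Proof.
case: x => [|b [|c x]] // [e1 [d1 ->]] [e2 [d2 ->]] _.
rewrite -cat1s restr_cat -[c :: x]cat1s restr_cat; apply: in_nucleus_restr.
have -> : restr (fun w => nuc e1 d1 (nuc e2 d2 w)) [:: b]
    = (fun w => restr (iota d1) [:: b (+) e2] (restr (iota d2) [:: b] w)).
  apply/funext => w; rewrite restr_comp; last exact: tree_map_nuc.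
  by rewrite nuc_letter !restr_nuc_letter.
exact: restr_gens_comp (restr_iota_letter_gens _ _) (restr_iota_letter_gens _ _).
Qed.

Lemma in_nucleus_restr_inv u w b x : in_nucleus u -> cancel u w -> cancel w u ->
  in_nucleus (restr w (b :: x)).
Proof.
move=> [e [d ->]] uw _; rewrite -cat1s restr_cat; apply: in_nucleus_restr.
have -> : w = fun v => iota d (if e then act_a v else v).
  apply/funext => v; rewrite -[in LHS](_ : nuc e d (iota d (if e then act_a v else v)) = v) ?uw //.
  by rewrite /nuc (iotaK cardF); case: (e); rewrite ?act_aK.
clear uw; apply: gens_in_nucleus; case: e; last exact: restr_iota_letter_gens.
have -> : restr (fun v => iota d (act_a v)) [:: b] = restr (iota d) [:: ~~ b].
  by apply/funext => v; rewrite restr_comp ?restr_a1 //; exact: tree_map_a.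
exact: restr_iota_letter_gens.
Qed.

Lemma InG_restr_in_nucleus f : InG n alpha f ->
  exists k, forall x, (k <= size x)%N -> in_nucleus (restr f x).
Proof.
have take_size k x : (k <= size x)%N -> size (take k x) = k.
  by move=> kx; rewrite size_take; case: ltnP => //; lia.
elim=> [|||g h Gg [k1 Ng] Gh [k2 Nh]|g h Gg [k Ng] gh hg].
- by exists 0%N => x _; rewrite restr_id; exact: id_in_nucleus.
- by exists 0%N => x _; apply: in_nucleus_restr; exact: act_a_in_nucleus.
- by move=> d; exists 0%N => x _; apply: in_nucleus_restr; exact: iota_in_nucleus.
- have th := tree_map_InG Gh.
  exists (k1 + k2 + 2)%N => x lx; set x1 := take (k1 + k2) x.
  have sx1 : size x1 = (k1 + k2)%N by apply: take_size; lia.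
  have -> : restr (fun w => g (h w)) x
      = restr (fun w => restr g (h x1) (restr h x1 w)) (drop (k1 + k2) x).
    rewrite -{1}[x](cat_take_drop (k1 + k2)) restr_cat; congr restr.
    by apply/funext => w; rewrite restr_comp.
  apply: in_nucleus_restr_comp; first by apply: Ng; rewrite th.1 sx1; lia.
    by apply: Nh; rewrite sx1; lia.
  by rewrite size_drop; lia.
- have tg := tree_map_InG Gg; have th := tree_map_inv tg gh hg.
  exists k.+1 => x lx; set x1 := take k x.
  have sx1 : size x1 = k by apply: take_size; lia.
  rewrite -[x](cat_take_drop k) restr_cat -/x1.
  case ex2 : (drop k x) => [|b x2]; first by move/(congr1 size): ex2; rewrite size_drop /=; lia.
  apply: (@in_nucleus_restr_inv (restr g (h x1))).
  + by apply: Ng; rewrite th.1 sx1.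
  + by rewrite -{2}[x1]hg; exact: restr_cancel.
  + exact: restr_cancel.
Qed.

End Nucleus.

Lemma cyl_ext s w w' : cyl s w -> w =1 w' -> cyl s w'.
Proof. by move=> h e i hi; rewrite -e h. Qed.

Lemma cyl_catl s t w : cyl (s ++ t) w -> cyl s w.
Proof. by move=> h i hi; rewrite h ?nth_cat ?hi // size_cat; lia. Qed.

Lemma cyl_mkseq w k : cyl (mkseq w k) w.
Proof. by move=> i; rewrite size_mkseq => hi; rewrite nth_mkseq. Qed.

Lemma cyl_prefix s t w : cyl s w -> cyl t w -> (size t <= size s)%N ->
  s = t ++ drop (size t) s.
Proof.
move=> cs ct ts; rewrite -{1}[s](cat_take_drop (size t)); congr (_ ++ _).
apply: (@eq_from_nth _ false) => [|i]; rewrite size_takel // => hi.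
by rewrite nth_take // -ct // -cs //; lia.
Qed.

Lemma cyl_common_ext s t w : cyl s w -> cyl t w ->
  exists d d', [/\ s ++ d = t ++ d', cyl (s ++ d) w & cyl (t ++ d') w].
Proof.
move=> cs ct; pose P := mkseq w (size s + size t).
have extP u : cyl u w -> (size u <= size s + size t)%N -> u ++ drop (size u) P = P.
  by move=> cu hu; rewrite -(cyl_prefix (@cyl_mkseq w (size s + size t)) cu) ?size_mkseq.
exists (drop (size s) P), (drop (size t) P).
by rewrite !extP ?leq_addr ?leq_addl //; split=> //; exact: cyl_mkseq.
Qed.

Definition germ_wit (r r' : Rep) (e e' : seq bool) : Prop :=
  [/\ r_mu r ++ e = r_mu r' ++ e',
      cyl (r_mu r ++ e) (r_w r),
      r_eta r ++ r_g r e = r_eta r' ++ r_g r' e' &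
      forall v, restr (r_g r) e v = restr (r_g r') e' v].

Lemma germ_wit_cat r r' e e' d : tree_map (r_g r) -> tree_map (r_g r') ->
  germ_wit r r' e e' -> cyl (r_mu r ++ e ++ d) (r_w r) -> germ_wit r r' (e ++ d) (e' ++ d).
Proof.
move=> [_ c] [_ c'] [h1 h2 h3 h4] hd; split=> //.
- by rewrite !catA h1.
- by rewrite c c' !catA h3 h4.
- exact: restr_eq_ext.
Qed.

Lemma germ_sym r r' : germ_eq r r' -> germ_eq r' r.
Proof.
move=> [hw [e [e' [h1 h2 h3 h4]]]]; split=> [i|]; first by rewrite hw.
by exists e', e; split=> //; rewrite -h1; exact: cyl_ext h2 hw.
Qed.

Lemma germ_trans r1 r2 r3 : tree_map (r_g r1) -> tree_map (r_g r2) -> tree_map (r_g r3) ->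
  germ_eq r1 r2 -> germ_eq r2 r3 -> germ_eq r1 r3.
Proof.
move=> t1 t2 t3 [w12 [e1 [e2 G12]]] [w23 [f2 [f3 G23]]].
split=> [i|]; first by rewrite w12 w23.
have c12 : cyl (r_mu r2 ++ e2) (r_w r2).
  by case: G12 => <- ? _ _; exact: cyl_ext w12.
have [d [d' [edd' cd cd']]] := cyl_common_ext c12 (let: And4 _ c _ _ := G23 in c).
move: edd'; rewrite -!catA => /(congr1 (drop (size (r_mu r2)))); rewrite !drop_size_cat // => edd'.
have cd1 : cyl (r_mu r1 ++ e1 ++ d) (r_w r1).
  by rewrite catA; case: G12 => -> _ _ _; apply: cyl_ext cd _ => i; rewrite w12.
have [h1 _ h3 h4] : germ_wit r1 r2 (e1 ++ d) (e2 ++ d) by exact: germ_wit_cat.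
have [k1 _ k3 k4] : germ_wit r2 r3 (f2 ++ d') (f3 ++ d').
  by apply: germ_wit_cat => //; rewrite catA.
exists (e1 ++ d), (f3 ++ d'); rewrite -{}edd' in k1 k3 k4.
split.
- by rewrite h1.
- exact: cd1.
- by rewrite h3.
- by move=> v; rewrite h4.
Qed.

Lemma germ_refl r : cyl (r_mu r) (r_w r) -> germ_eq r r.
Proof. by move=> c; split=> //; exists [::], [::]; split; rewrite ?cats0. Qed.

Lemma onesD i j : ones (i + j) = ones i ++ ones j.
Proof. by rewrite /ones nseqD. Qed.

Definition ones_inf : iword := fun _ => true.

Lemma cyl_onesP m w : cyl (ones m) w <-> forall i, (i < m)%N -> w i = true.
Proof. by rewrite /cyl /ones size_nseq; split=> h i hi; have := h i hi; rewrite nth_nseq hi. Qed.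

Lemma cyl_ones_inf m : cyl (ones m) ones_inf.
Proof. exact/cyl_onesP. Qed.

Lemma cyl_ones_leq m m' w : (m <= m')%N -> cyl (ones m') w -> cyl (ones m) w.
Proof. by move=> hm /cyl_onesP h; apply/cyl_onesP => i hi; apply: h; lia. Qed.

Lemma cyl_ones_prefix s m w : cyl s w -> cyl (ones m) w -> (size s <= m)%N ->
  s = ones (size s).
Proof.
move=> cs /cyl_onesP cm sm; apply: (@eq_from_nth _ false); first by rewrite size_nseq.
by move=> i hi; rewrite nth_nseq hi -cs // cm //; lia.
Qed.

Lemma Umz_leq m m' g r : (m <= m')%N -> Umz m' g r -> Umz m g r.
Proof. by move=> hm [w [cw cw' G]]; exists w; split=> //; exact: cyl_ones_leq cw. Qed.

Lemma bound_list (A : Type) (s : seq A) (P : A -> nat -> Prop) :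
    (forall a m m', (m <= m')%N -> P a m -> P a m') ->
    (forall a, List.In a s -> exists m, P a m) ->
  exists m, forall a, List.In a s -> P a m.
Proof.
move=> mono; elim: s => [|a s IH] hs; first by exists 0%N.
have [m1 h1] := hs a (or_introl erefl).
have [m2 h2] := IH (fun b hb => hs b (or_intror hb)).
exists (m1 + m2)%N => b [<-|hb]; [apply: (mono _ m1 _ _ h1) | apply: (mono _ m2 _ _ (h2 b hb))]; lia.
Qed.

Lemma bound_finType (T : finType) (P : T -> nat -> Prop) :
    (forall a m m', (m <= m')%N -> P a m -> P a m') ->
    (forall a, exists m, P a m) ->
  exists m, forall a, P a m.
Proof.
move=> mono /choice[M hM]; exists (\max_a M a)%N => a.
exact: (mono _ _ _ (@leq_bigmax _ M a) (hM a)).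
Qed.

Section Steinberg.
Variables (F : finFieldType) (n : nat).
Hypothesis cardF : #|F| = (2 ^ n)%N.
Variable alpha : F.
Hypothesis alpha_neq0 : alpha != 0.
Local Notation iota := (iota_act n alpha).
Local Notation wf := (wf n alpha).

(* [zrep b w] represents the germ of (empty, iota b, empty) at w; z_b is [zrep b ones_inf]. *)
Definition zrep (b : F) (w : iword) : Rep := MkRep [::] (iota b) [::] w.

Lemma wf_zrep b w : wf (zrep b w).
Proof. by split=> //; constructor. Qed.

Lemma germ_zrep_extends_to_ones_inf g eta mu beta k w : InG n alpha g ->
    (forall x, (k <= size x)%N -> in_nucleus n alpha (restr g x)) ->
    cyl (ones (size mu + k)) w -> germ_eq (zrep beta w) (MkRep eta g mu w) ->
  exists gam, germ_eq (zrep gam ones_inf) (MkRep eta g mu ones_inf).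
Proof.
move=> Gg Ng cw [_ [e0 [e0' G0]]]; have [gs gc] := tree_map_InG Gg.
set p := size mu; set m := (p + k)%N.
(* Lengthen the witness past 1^m: the nuclear restriction of g along 1^k is then compared with
   an iota on a nonempty word, which rules out a leading a. *)
have [d [d' [ed cd _]]] := cyl_common_ext (let: And4 _ c _ _ := G0 in c) (@cyl_mkseq w m.+1).
have [/= h1 h2 h3 _] : germ_wit (zrep beta w) (MkRep eta g mu w) (e0 ++ d) (e0' ++ d).
  by apply: germ_wit_cat; rewrite ?catA //; exact: tree_map_iota.
set E := e0 ++ d in h1 h2 h3; set E' := e0' ++ d in h1 h3.
have sE : (m < size E)%N by move/(congr1 size): ed; rewrite !size_cat size_mkseq /=; lia.
have emu : mu = ones p.
  by apply: cyl_ones_prefix cw _; [rewrite h1 in h2; exact: cyl_catl h2 | lia].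
have eE : E = ones m ++ drop m E by rewrite {1}(cyl_prefix h2 cw) ?size_nseq //; lia.
set dd := drop m E in eE.
have eE' : E' = ones k ++ dd.
  by move: h1; rewrite eE emu onesD -catA => /(congr1 (drop p)); rewrite !drop_size_cat ?size_nseq.
have seta : size eta = p.
  by move/(congr1 size): h3; rewrite iota_size size_cat gs h1 size_cat; lia.
move: h3; rewrite eE eE' (tree_map_iota _ _ _).2 iota_ones restr_iota_ones gc catA.
move=> /eqP; rewrite eqseq_cat; last by rewrite size_cat gs !size_nseq seta.
move=> /andP[/eqP h3a /eqP h3b].
have [e1 [del edel]] := Ng (ones k) (eq_leq (esym (size_nseq _ _))).
have e1F : e1 = false.
  have : (0 < size dd)%N by rewrite /dd size_drop; lia.
  case: dd h3b {eE eE'} => [|c v] // /(congr1 (head false)); rewrite edel.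
  by rewrite -[iota _ _]/(nuc n alpha false _ _) !head_nuc => /(congr1 (addb c)); rewrite !addKb.
(* the restriction of iota gam along 1^m is iota del *)
exists (del / alpha ^+ m); split=> //; exists (ones m), (ones k); split=> /=.
- by rewrite emu onesD.
- exact: cyl_ones_inf.
- by rewrite iota_ones h3a.
- by move=> v; rewrite restr_iota_ones edel e1F mulrC divfK ?expf_neq0.
Qed.

Lemma Theta_meeting_Umz_contains_z eta g mu nu b : InG n alpha g -> (forall w, cyl nu w -> cyl mu w) ->
    (forall m, exists r, [/\ wf r, Theta eta g mu (cyl nu) r & Umz m (iota b) r]) ->
  exists gam, Theta eta g mu (cyl nu) (zrep gam ones_inf).
Proof.
move=> Gg numu acc; have [k Ng] := InG_restr_in_nucleus cardF Gg.
have [r [[Gr _] [w [cnw _ Gw]] [w' [cw _ Gw']]]] := acc (size nu + (size mu + k))%N.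
have ww' : w' = w.
  by apply/funext => i; case: Gw => /(_ i) /= <- _; case: Gw' => /(_ i) /= <-.
subst w'; have cw1 := cyl_ones_leq (leq_addl _ _) cw.
have Gbw := @germ_trans (zrep b w) r (MkRep eta g mu w)
  (tree_map_iota _ _ _) (tree_map_InG Gr) (tree_map_InG Gg) (germ_sym Gw') Gw.
have [gam Ggam] := germ_zrep_extends_to_ones_inf Gg Ng cw1 Gbw.
have enu : nu = ones (size nu) by apply: cyl_ones_prefix cnw cw _; lia.
exists gam, ones_inf; split=> //; last by apply: numu; rewrite enu; exact: cyl_ones_inf.
by rewrite enu; exact: cyl_ones_inf.
Qed.

Lemma open_contains_Umz B b : gopen n alpha B -> B (zrep b ones_inf) ->
  exists m, forall r, wf r -> Umz m (iota b) r -> B r.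
Proof.
move=> Bo Bz.
have [eta [g [mu [U [Gg Uo _ [w0 [Uw0 _ [w0E [e [e' [/= h1 h2 h3 h4]]]]]] BT]]]]] :=
  Bo _ (wf_zrep b ones_inf) Bz.
have [k Uk] := Uo w0 Uw0.
have ee : e = ones (size e) := cyl_ones_prefix h2 (@cyl_ones_inf (size e)) (leqnn _).
exists (k + size e)%N => r wfr [w [cw _ Gr0]].
have ce : cyl e w by rewrite ee; apply: cyl_ones_leq cw; lia.
have Gw : germ_eq (zrep b w) (MkRep eta g mu w) by split=> //; exists e, e'.
apply: (BT r wfr); exists w; split.
- apply: (Uk w) => i ik; have /= <- := w0E i.
  by move/cyl_onesP: cw => -> //; lia.
- by apply: (@cyl_catl mu e'); rewrite -h1.
- exact: (@germ_trans r (zrep b w) (MkRep eta g mu w)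
            (tree_map_InG wfr.1) (tree_map_iota _ _ _) (tree_map_InG Gg) Gr0 Gw).
Qed.

Lemma cobis_Umz_iff B b : cobis n alpha B -> B (zrep b ones_inf) ->
  exists m, forall m', (m <= m')%N -> forall r, wf r -> (exists b', Umz m' (iota b') r) ->
    (B r <-> Umz m' (iota b) r).
Proof.
move=> [Bo _ Bb] Bz; have [m Bm] := open_contains_Umz Bo Bz.
exists m => m' mm' r wfr [b' [w [cw _ Gr]]].
split=> [Br|Ur]; last exact: Bm wfr (Umz_leq mm' Ur).
have Uz : Umz m' (iota b) (zrep b w) by exists w; split=> //; exact: germ_refl.
have [src_inj _] := Bb _ _ wfr (wf_zrep b w) Br (Bm _ (wf_zrep b w) (Umz_leq mm' Uz)).
by exists w; split=> //; apply: src_inj => i; case: Gr => /(_ i).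
Qed.

Lemma Theta_cyl_open eta g mu nu : InG n alpha g -> (forall w, cyl nu w -> cyl mu w) ->
  gopen n alpha (Theta eta g mu (cyl nu)).
Proof.
move=> Gg numu r _ Tr; exists eta, g, mu, (cyl nu); split=> //.
by move=> w cw; exists (size nu) => w' ww' i hi; rewrite ww' //; exact: cw.
Qed.

Lemma gopen_cyl_basis B r : gopen n alpha B -> wf r -> B r ->
  exists eta g mu nu, [/\ InG n alpha g, forall w, cyl nu w -> cyl mu w,
    Theta eta g mu (cyl nu) r & forall r', wf r' -> Theta eta g mu (cyl nu) r' -> B r'].
Proof.
move=> Bo wfr Br; have [eta [g [mu [U [Gg Uo Umu [w [Uw cmw Gr]] BT]]]]] := Bo r wfr Br.
have [k Uk] := Uo w Uw; pose nu := mkseq w (k + size mu).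
have agree w' : cyl nu w' -> forall i, (i < k + size mu)%N -> w' i = w i.
  by move=> cw' i hi; rewrite cw' ?size_mkseq ?nth_mkseq.
exists eta, g, mu, nu; split=> //.
- by move=> w' cw' i hi; rewrite agree ?cmw //; lia.
- by exists w; split=> //; exact: cyl_mkseq.
- move=> r' wfr' [w' [cw' _ Gr']]; apply: (BT r' wfr').
  have Uw' : U w' by apply: (Uk w') => i hi; apply: (agree w' cw'); lia.
  by exists w'; split=> //; exact: Umu.
Qed.

Lemma cobis_Umz_disjoint B : cobis n alpha B -> (forall b, ~ B (zrep b ones_inf)) ->
  exists m, forall r, wf r -> (exists b, Umz m (iota b) r) -> ~ B r.
Proof.
move=> [Bo Bc _] Bz.
pose Cov O := exists eta g mu nu, [/\ O = Theta eta g mu (cyl nu), InG n alpha g,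
  forall w, cyl nu w -> cyl mu w & forall r, wf r -> O r -> B r].
have Cov_open O : Cov O -> gopen n alpha O.
  by move=> [eta [g [mu [nu [-> Gg numu _]]]]]; exact: Theta_cyl_open.
have Cov_B r : wf r -> B r -> exists2 O, Cov O & O r.
  move=> wfr Br; have [eta [g [mu [nu [Gg numu Tr TB]]]]] := gopen_cyl_basis Bo wfr Br.
  by exists (Theta eta g mu (cyl nu)) => //; exists eta, g, mu, nu.
have [s [sCov sB]] := Bc Cov Cov_open Cov_B.
have avoid O b : Cov O -> exists m, forall r, wf r -> O r -> ~ Umz m (iota b) r.
  move=> [eta [g [mu [nu [-> Gg numu OB]]]]]; apply: contrapT => noM.
  have [gam Tz] : exists gam, Theta eta g mu (cyl nu) (zrep gam ones_inf).
    apply: (Theta_meeting_Umz_contains_z (b := b) Gg numu) => m; apply: contrapT => noR.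
    by apply: noM; exists m => r wfr Tr Ur; apply: noR; exists r.
  exact: (Bz gam) (OB _ (wf_zrep gam ones_inf) Tz).
have [m avoid_m] : exists m, forall O, List.In O s -> forall b r, wf r -> O r -> ~ Umz m (iota b) r.
  apply: bound_list => [O m m' mm' h b r wfr Or /(Umz_leq mm')|O Os]; first exact: h.
  apply: bound_finType => [b m m' mm' h r wfr Or /(Umz_leq mm')|b]; first exact: h.
  exact: avoid (sCov O Os).
exists m => r wfr [b Ur] Br; have [O Os Or] := sB r wfr Br.
exact: avoid_m Os b r wfr Or Ur.
Qed.

Definition span_on_Um (K : fieldType) (h : Rep -> K) (m : nat) : Prop :=
  exists c : F -> K, forall r, wf r -> (exists b, Umz m (iota b) r) ->
    h r = \sum_(b : F) c b * chi K (Umz m (iota b)) r.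

Lemma chi_cobis_span (K : fieldType) B : cobis n alpha B ->
  exists m0, forall m, (m0 <= m)%N -> span_on_Um (chi K B) m.
Proof.
move=> cB; case: (pselect (exists b, B (zrep b ones_inf))) => [[b Bz]|nz].
  have [m0 BU] := cobis_Umz_iff cB Bz; exists m0 => m m0m.
  exists (fun b' => if b' == b then 1 else 0) => r wfr Ur.
  rewrite (bigD1 b) //= eqxx mul1r big1 ?addr0 => [|b' /negbTE->]; last by rewrite mul0r.
  by rewrite /chi (propext (BU m m0m r wfr Ur)).
have [m0 BU] := cobis_Umz_disjoint cB (fun b Bz => nz (ex_intro _ b Bz)).
exists m0 => m m0m; exists (fun=> 0) => r wfr [b Ur].
rewrite big1 => [|b' _]; last by rewrite mul0r.
rewrite /chi; case: asboolP => // Br.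
by case: (BU r wfr (ex_intro _ b (Umz_leq m0m Ur)) Br).
Qed.

Lemma cobis_sum_span (K : fieldType) (s : seq (K * (Rep -> Prop))) :
    (forall p, List.In p s -> cobis n alpha p.2) ->
  exists m0, forall m, (m0 <= m)%N -> span_on_Um (fun r => \sum_(p <- s) p.1 * chi K p.2 r) m.
Proof.
elim: s => [|p s IH] cs.
  exists 0%N => m _; exists (fun=> 0) => r _ _.
  by rewrite big_nil big1 // => b _; rewrite mul0r.
have [m1 span1] := chi_cobis_span K (cs p (or_introl erefl)).
have [m2 span2] := IH (fun q sq => cs q (or_intror sq)).
exists (m1 + m2)%N => m mm.
have [c1 H1] := span1 m (leq_trans (leq_addr _ _) mm).
have [c2 H2] := span2 m (leq_trans (leq_addl _ _) mm).
exists (fun b => p.1 * c1 b + c2 b) => r wfr Ur.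
rewrite big_cons H1 // H2 // mulr_sumr -big_split /=.
by apply: eq_bigr => b _; rewrite mulrDl mulrA.
Qed.

End Steinberg.

Unset Implicit Arguments. Set Strict Implicit.

Theorem mainTheorem9 (K : fieldType) (n : nat) (hn : (2 <= n)%N)
  (F : finFieldType) (hF : #|F| = (2 ^ n)%N)
  (alpha : F) (halpha : (2 ^ n - 1)%N.-primitive_root alpha)
  (f : Rep -> K) (hf : steinberg n alpha f) :
  exists m : nat, (1 <= m)%N /\
    exists c : F -> K,
      forall r : Rep, wf n alpha r ->
        (exists beta : F, Umz m (iota_act n alpha beta) r) ->
        f r = \sum_(beta : F) c beta * chi K (Umz m (iota_act n alpha beta)) r.
Proof.
have [s [cs fE]] := hf.
have [m0 span_s] := cobis_sum_span hF (prim_root_neq0 halpha) cs.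
have [c Hc] := span_s m0.+1 (leqnSn _).
by exists m0.+1; split=> //; exists c => r wfr Ur; rewrite fE // Hc.
Qed.
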